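(* Let $n\ge1$ and let $A$ be a set with an $(n+1)$-ary operation $\theta$, binary operations $\alpha_1,\dots,\alpha_n$ and elements $e_1,\dots,e_n$ such that $\alpha_i(a,a)=e_i$ and $\theta(\alpha_1(a,b),\dots,\alpha_n(a,b),b)=a$ for all $a,b\in A$, and suppose $\theta$ is 2-associative, i.e. $\theta(a_1,\dots,a_n,\theta(b_1,\dots,b_n,c))=\theta(\theta(a_1,\dots,a_n,b_1),\dots,\theta(a_1,\dots,a_n,b_n),c)$ for all elements. Then the binary operation $ab=\theta(a,a,\dots,a,b)$ (with $a$ in the first $n$ arguments) is associative. *)

From mathcomp Require Import all_boot.
Set Implicit Arguments.
Unset Strict Implicit.
Unset Printing Implicit Defensive.

(* An (n+1)-ary operation on A is represented as theta : ('I_n -> A) -> A -> A: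
   theta x c = theta(x_0, ..., x_{n-1}, c). *)

Definition two_assoc (A : Type) (n : nat) (theta : ('I_n -> A) -> A -> A) :=
  forall (a b : 'I_n -> A) (c : A),
    theta a (theta b c) = theta (fun i => theta a (b i)) c.

Definition derived_mul (A : Type) (n : nat) (theta : ('I_n -> A) -> A -> A)
  (a b : A) : A := theta (fun _ => a) b.

From mathcomp Require Import all_boot.

Lemma derived_mulA (A : Type) (n : nat) (theta : ('I_n -> A) -> A -> A) :
  two_assoc theta -> associative (derived_mul theta).
Proof. by move=> theta_assoc a b c; apply: theta_assoc. Qed.

Theorem lemma4p2 (A : Type) (n : nat) (Hn : 1 <= n)
  (theta : ('I_n -> A) -> A -> A) (alpha : 'I_n -> A -> A -> A) (e : 'I_n -> A)
  (Halpha : forall (i : 'I_n) (a : A), alpha i a a = e i)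
  (Hdiv : forall a b : A, theta (fun i => alpha i a b) b = a)
  (Hassoc : two_assoc theta) :
  forall a b c : A,
    derived_mul theta a (derived_mul theta b c)
    = derived_mul theta (derived_mul theta a b) c.
Proof. exact: derived_mulA. Qed.
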